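(* The pseudovariety $\mathsf{CS}$ of all finite completely simple semigroups (in the signature of semigroups) is strong.
   Context: For a pseudovariety $\mathsf U$ and finite set $A$, $\Omega_A\mathsf U$ is the free pro-$\mathsf U$ algebra on $A$ (here the free pro-$\mathsf{CS}$ semigroup). A $\mathsf U$-pseudoidentity is $u=v$ with $u,v\in\Omega_B\mathsf U$, $B$ finite; it holds in $T\in\mathsf U$ if both sides agree under every continuous homomorphism $\Omega_B\mathsf U\to T$; $[\![\Sigma]\!]_{\mathsf U}$ is the class of members of $\mathsf U$ satisfying $\Sigma$. Provability: for a set $\Sigma$ of $\mathsf U$-pseudoidentities and finite $A$, $\Sigma_0\subseteq\Omega_A\mathsf U\times\Omega_A\mathsf U$ is the set of pairs $(\mathbf t(\varphi(u),w_1,\dots,w_n),\mathbf t(\varphi(v),w_1,\dots,w_n))$ with $u=v$ or $v=u$ in $\Sigma$ ($u,v\in\Omega_B\mathsf U$), $\varphi:\Omega_B\mathsf U\to\Omega_A\mathsf U$ a continuous homomorphism, $\mathbf t$ a semigroup term, $w_i\in\Omega_A\mathsf U$; $\Sigma_{2\alpha+1}$ is the transitive closure of $\Sigma_{2\alpha}$, $\Sigma_{2\alpha+2}$ the topological closure of $\Sigma_{2\alpha+1}$, unions at limit ordinals; $u=v$ is provable from $\Sigma$ if $(u,v)\in\bigcup_\alpha\Sigma_\alpha$. $\mathsf U$ is strong if for every set $\Sigma$ of $\mathsf U$-pseudoidentities, every $\mathsf U$-pseudoidentity valid in $[\![\Sigma]\!]_{\mathsf U}$ is provable from $\Sigma$.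 *)

From HB Require Import structures.
From mathcomp Require Import all_boot all_order.
From mathcomp Require Import all_classical topology.
Set Implicit Arguments. Unset Strict Implicit. Unset Printing Implicit Defensive.
Local Open Scope classical_set_scope.

Record finSemigroup := FinSemigroup {
  fs_sort :> finType;
  fs_mul : fs_sort -> fs_sort -> fs_sort;
  fs_assoc : associative fs_mul }.

Definition is_ideal (S : finSemigroup) (I : {set S}) : Prop :=
  I != finset.set0 /\ forall s x, x \in I -> fs_mul s x \in I /\ fs_mul x s \in I.

Definition is_simple (S : finSemigroup) : Prop :=
  forall I : {set S}, is_ideal I -> I = finset.setTfor S.

Definition idempotent_elt (S : finSemigroup) (e : S) : Prop := fs_mul e e = e.

Definition idem_le (S : finSemigroup) (e f : S) : Prop :=
  e = fs_mul e f /\ e = fs_mul f e.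

Definition primitive_idempotent (S : finSemigroup) (e : S) : Prop :=
  idempotent_elt e /\
  forall f, idempotent_elt f -> idem_le f e -> f = e.

Definition completely_simple (S : finSemigroup) : Prop :=
  is_simple S /\ exists e : S, primitive_idempotent e.

Definition is_hom (X Y : Type) (mX : X -> X -> X) (mY : Y -> Y -> Y) (h : X -> Y) :=
  forall x y, h (mX x y) = mY (h x) (h y).

Definition cont_discrete (X : topologicalType) (S : Type) (h : X -> S) : Prop :=
  forall s : S, open (h @^-1` [set s]).

(* A choice, for every finite set A, of the free pro-CS semigroup Omega_A CS:
   a compact Hausdorff topological semigroup, residually CS (points are separated
   by continuous homomorphisms onto finite completely simple semigroups, i.e. it is
   pro-CS), with a map A -> Omega_A CS such that every map from A into a member of
   CS extends uniquely to a continuous homomorphism. *)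
Record freeProCS := FreeProCS {
  FP : finType -> topologicalType;
  fp_mul : forall A, FP A -> FP A -> FP A;
  fp_assoc : forall A, associative (@fp_mul A);
  fp_mul_cont : forall A, continuous (fun p : FP A * FP A => fp_mul p.1 p.2);
  fp_hausdorff : forall A, hausdorff_space (FP A);
  fp_compact : forall A, compact [set: FP A];
  fp_gen : forall A : finType, A -> FP A;
  fp_residual : forall (A : finType) (x y : FP A), x <> y ->
     exists S : finSemigroup, completely_simple S /\
       exists h : FP A -> S,
         [/\ is_hom (@fp_mul A) (@fs_mul S) h, cont_discrete h & h x <> h y];
  fp_universal : forall (A : finType) (S : finSemigroup), completely_simple S ->
     forall f : A -> S, exists h : FP A -> S,
       [/\ is_hom (@fp_mul A) (@fs_mul S) h, cont_discrete h &
           forall a, h (fp_gen a) = f a] /\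
       forall h' : FP A -> S, is_hom (@fp_mul A) (@fs_mul S) h' -> cont_discrete h' ->
          (forall a, h' (fp_gen a) = f a) -> h' = h }.

Section Pseudo.
Variable F : freeProCS.

(* a CS-pseudoidentity u = v, with u, v in Omega_B CS for a finite set B *)
Definition pseudoid := {B : finType & (FP F B * FP F B)%type}.

Definition holds_in (T : finSemigroup) (B : finType) (u v : FP F B) : Prop :=
  forall h : FP F B -> T, is_hom (@fp_mul F B) (@fs_mul T) h -> cont_discrete h ->
    h u = h v.

Definition in_model (Sigma : pseudoid -> Prop) (T : finSemigroup) : Prop :=
  completely_simple T /\
  forall p : pseudoid, Sigma p -> holds_in T (projT2 p).1 (projT2 p).2.

Inductive sterm := SVar of nat | SMul of sterm & sterm.

Fixpoint teval (X : Type) (m : X -> X -> X) (val : nat -> X) (t : sterm) : X :=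
  match t with
  | SVar i => val i
  | SMul t1 t2 => m (teval m val t1) (teval m val t2)
  end.

(* Sigma_0 on Omega_A CS: pairs (t(phi u, w_1,...,w_n), t(phi v, w_1,...,w_n)) *)
Definition Sigma0 (Sigma : pseudoid -> Prop) (A : finType) (x y : FP F A) : Prop :=
  exists (B : finType) (u v : FP F B),
    (Sigma (existT _ B (u, v)) \/ Sigma (existT _ B (v, u))) /\
    exists phi : FP F B -> FP F A,
      [/\ is_hom (@fp_mul F B) (@fp_mul F A) phi, continuous phi &
       exists (t : sterm) (w : nat -> FP F A),
         x = teval (@fp_mul F A) (fun i => if i is i'.+1 then w i' else phi u) t /\
         y = teval (@fp_mul F A) (fun i => if i is i'.+1 then w i' else phi v) t].

(* provability: the union over all ordinals of the Sigma_alpha (alternately closing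
   under transitivity and topological closure) is the least relation containing
   Sigma_0 (and the diagonal) that is transitive and topologically closed in
   Omega_A CS x Omega_A CS. *)
Definition provable (Sigma : pseudoid -> Prop) (A : finType) (x y : FP F A) : Prop :=
  forall R : FP F A -> FP F A -> Prop,
    (forall a b, Sigma0 Sigma a b -> R a b) ->
    (forall a, R a a) ->
    (forall a b c, R a b -> R b c -> R a c) ->
    closed [set p : FP F A * FP F A | R p.1 p.2] ->
    R x y.

End Pseudo.

Definition strong_CS (F : freeProCS) : Prop :=
  forall (Sigma : pseudoid F -> Prop) (A : finType) (u v : FP F A),
    (forall T : finSemigroup, in_model Sigma T -> holds_in T u v) ->
    provable Sigma u v.

From HB Require Import structures.
From mathcomp Require Import all_boot all_order.
From mathcomp Require Import all_classical topology.
From mathcomp Require Import zify.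
Set Implicit Arguments. Unset Strict Implicit. Unset Printing Implicit Defensive.

(* Suppose that u = v holds in every member of [[Sigma]] but is not provable.
   Provable pairs form a closed set, so a continuous homomorphism g onto a finite
   completely simple semigroup separates (u, v) from it; refine g so that it also
   records first and last letters. Relate x and y when they are g-equivalent to
   the two ends of a provable pair. This relation is transitive: if a ~ b is
   provable and g b = g b', then a' = (a b^(ω-1) b') (a b^ω)^(ω-1) a is
   g-equivalent to a, since finite completely simple semigroups satisfy
   (xy)^ω x = x, and a' is provably equal to b^ω b' (b b^ω)^(ω-1) b, whose image
   under every continuous H onto a finite completely simple semigroup is H b',
   because b and b' share first and last letters, so H b and H b' are R- and
   L-related. Compactness turns these approximations into a single element
   provably equal to b'. Hence the relation is a congruence, the quotient of the
   image of g by it is a finite completely simple semigroup, and lifting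
   homomorphisms from Omega_B CS through the quotient shows that it satisfies
   Sigma. So u and v are related, a contradiction. *)

Section Powers.
Variables (T : Type) (m : T -> T -> T).
Hypothesis mA : associative m.

(* [pw m x n] is x^(n+1): semigroups have no unit, so exponents start at 1. *)
Definition pw (x : T) (n : nat) : T := iter n (m x) x.

Lemma pwS x n : pw x n.+1 = m x (pw x n). Proof. by []. Qed.

Lemma pw_idem x n : m x x = x -> pw x n = x.
Proof. by move=> xx; elim: n => [//|n IH]; rewrite pwS IH. Qed.

Lemma pwSr x n : pw x n.+1 = m (pw x n) x.
Proof. by rewrite pwS; elim: n => [//|n IH]; rewrite !pwS -mA -IH. Qed.

Lemma pwD x a b : m (pw x a) (pw x b) = pw x (a + b).+1.
Proof. by elim: a => [|a IH] //; rewrite pwS -mA IH. Qed.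

Lemma pwM x a b : pw (pw x a) b = pw x (a.+1 * b.+1).-1.
Proof.
elim: b => [|b IH]; first by rewrite muln1.
by rewrite pwS IH pwD; congr pw; rewrite mulnS; lia.
Qed.

Lemma pw_shift x y n : m x (pw (m y x) n) = m (pw (m x y) n) x.
Proof.
elim: n => [|n IH]; first by rewrite /= mA.
by rewrite !pwS -[in RHS]mA -IH !mA.
Qed.

Lemma pw_eventually_periodic x i d : pw x (i + d) = pw x i ->
  forall c q, pw x (c + i + q * d) = pw x (c + i).
Proof.
move=> Hid c q; elim: q => [|q IH]; first by rewrite addn0.
have -> : c + i + q.+1 * d = c + q * d + (i + d) by rewrite mulSn; lia.
have iter_pw a b : pw x (a + b) = iter a (m x) (pw x b) by rewrite /pw iterD.
by rewrite iter_pw Hid -iter_pw -IH; congr pw; lia.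
Qed.

Lemma pw_period x N : pw x N = x -> forall k n, pw x (n + k * N) = pw x n.
Proof.
by move=> HN k n; have := @pw_eventually_periodic x 0 N HN n k; rewrite !addn0.
Qed.

End Powers.

Lemma hom_pw (X Y : Type) (mX : X -> X -> X) (mY : Y -> Y -> Y) (h : X -> Y) :
  is_hom mX mY h -> forall x n, h (pw mX x n) = pw mY (h x) n.
Proof. by move=> hh x; elim=> [//|n IH]; rewrite !pwS hh IH. Qed.

Local Notation "x ⋅ y" := (fs_mul x y) (at level 40, left associativity).
Local Notation pws := (pw (@fs_mul _)).

Lemma finite_idempotent_pw (S : finSemigroup) (s : S) :
  exists k, pws s k ⋅ pws s k = pws s k.
Proof.
have /injectivePn [i [j neq_ij eq_ij]] :
    ~~ injectiveb (fun i : 'I_#|S|.+1 => pws s i).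
  by apply/injectiveP => /leq_card; rewrite card_ord ltnn.
wlog lt_ij : i j neq_ij eq_ij / i < j.
  move=> W; case: (ltngtP i j) => [|lt_ji|/val_inj eq]; first exact: W.
    by apply: (W j i) => //; rewrite eq_sym.
  by rewrite eq eqxx in neq_ij.
set d := j - i.
have Hd : pws s (i + d) = pws s i by rewrite subnKC ?(ltnW lt_ij).
have d_gt0 : 0 < d by rewrite subn_gt0.
exists (i.+1 * d).-1; rewrite pwD; last exact: fs_assoc.
have := @pw_eventually_periodic _ _ s i d Hd ((i.+1 * d).-1 - i) i.+1.
have i_lt : i < i.+1 * d by rewrite mulSn; nia.
have -> : (i.+1 * d).-1 - i + i = (i.+1 * d).-1 by lia.
by move=> <-; congr pws; lia.
Qed.

(** * Finite completely simple semigroups *)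

(* The pseudoidentity (xy)^ω x = x in existential form; together with
   nonemptiness it characterises the finite completely simple semigroups. *)
Definition cs_law (S : finSemigroup) :=
  forall x y : S, exists n, pws (x ⋅ y) n ⋅ x = x.

Section Simple.
Variable S : finSemigroup.
Hypothesis simS : is_simple S.

Lemma simple_R_mulr (x y : S) : exists t, x = x ⋅ y ⋅ t.
Proof.
pose I := [set s : S | [exists p, exists q, s == p ⋅ (x ⋅ y) ⋅ q]].
have idI : is_ideal I.
  split.
    apply/set0Pn; exists (x ⋅ (x ⋅ y) ⋅ x); rewrite inE.
    by apply/existsP; exists x; apply/existsP; exists x.
  move=> s z; rewrite !inE => /existsP [p /existsP [q /eqP ->]]; split.
    by apply/existsP; exists (s ⋅ p); apply/existsP; exists q; rewrite !fs_assoc.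
  by apply/existsP; exists p; apply/existsP; exists (q ⋅ s); rewrite !fs_assoc.
have /setP/(_ x) := simS idI; rewrite !inE => /existsP [p /existsP [q /eqP x_pxyq]].
have x_sandwich k : x = pws p k ⋅ x ⋅ pws (y ⋅ q) k.
  elim: k => [|k IH]; first by rewrite /= {1}x_pxyq -!fs_assoc.
  rewrite {1}IH {1}x_pxyq [pws p k.+1](pwSr (@fs_assoc S)) pwS.
  by rewrite -!fs_assoc.
have [k e_idem] := finite_idempotent_pw (y ⋅ q).
have xe : x = x ⋅ pws (y ⋅ q) k.
  by rewrite {2}(x_sandwich k) -fs_assoc e_idem -(x_sandwich k).
exists (q ⋅ pws (y ⋅ q) (k + k)).
by rewrite -fs_assoc (fs_assoc y) -pwS -(pwD (@fs_assoc S)) e_idem -xe.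
Qed.

Lemma simple_subgroup (z : S) : exists k, pws z k ⋅ z = z.
Proof.
have [t z_zzt] := simple_R_mulr z z.
have z_pw_div j : exists w, z = pws z j ⋅ w.
  elim: j => [|j [w z_eq]]; first by exists (z ⋅ t); rewrite /= fs_assoc.
  by exists (w ⋅ t); rewrite pwS !fs_assoc -(fs_assoc z) -z_eq.
have [k e_idem] := finite_idempotent_pw z.
have [w z_eq] := z_pw_div k.+1.
exists k; rewrite (pwSr (@fs_assoc S)) in z_eq.
have -> : pws z k ⋅ z = pws z k ⋅ (pws z k ⋅ z ⋅ w) by rewrite -z_eq.
by rewrite !fs_assoc e_idem -z_eq.
Qed.

End Simple.

Lemma completely_simple_cs_law (S : finSemigroup) : completely_simple S -> cs_law S.
Proof.
move=> [simS _] x y.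
have [k Hk] := simple_subgroup simS (x ⋅ y).
have [t Ht] := simple_R_mulr simS x y.
by exists k; rewrite {2}Ht fs_assoc Hk -Ht.
Qed.

Lemma cs_law_completely_simple (S : finSemigroup) (s : S) :
  cs_law S -> completely_simple S.
Proof.
move=> csS; split.
  move=> I [/set0Pn [y yI] I_ideal]; apply/setP => x; rewrite !inE.
  have [n <-] := csS x y.
  have xyI : x ⋅ y \in I by case: (I_ideal x y yI).
  have : pws (x ⋅ y) n \in I.
    by elim: n => [//|n IH]; rewrite pwS; case: (I_ideal (x ⋅ y) _ IH).
  by move=> /(I_ideal x) [].
have [k e_idem] := finite_idempotent_pw s.
exists (pws s k); split => // f f_idem [f_le1 f_le2].
have [n Hn] := csS (pws s k) f.
by rewrite -f_le2 pw_idem // -f_le1 in Hn.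
Qed.

Definition rclass (S : finSemigroup) (s : S) : {set S} := [set s ⋅ t | t : S].
Definition lclass (S : finSemigroup) (s : S) : {set S} := [set t ⋅ s | t : S].

Lemma omega_rclass (S : finSemigroup) (b b' : S) n :
  pws b n.+2 = b -> b' \in rclass b -> pws b n.+1 ⋅ b' = b'.
Proof.
by move=> per /imsetP [t _ ->]; rewrite fs_assoc -(pwSr (@fs_assoc S)) per.
Qed.

Lemma omega_lclass (S : finSemigroup) (b b' : S) n :
  pws b n.+2 = b -> b' \in lclass b -> b' ⋅ pws b n.+1 = b'.
Proof.
by move=> per /imsetP [t _ ->]; rewrite -fs_assoc -pwS per.
Qed.

Section CSLaw.
Variable S : finSemigroup.
Hypothesis csS : cs_law S.

Lemma cs_law_R (x y : S) : exists t, x = x ⋅ y ⋅ t.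
Proof.
have [n Hn] := csS x y; exists (pws (x ⋅ y) (n + n) ⋅ x).
by rewrite fs_assoc -pwS -(pwD (@fs_assoc S)) -fs_assoc !Hn.
Qed.

Lemma cs_law_L (x y : S) : exists t, x = t ⋅ (y ⋅ x).
Proof.
have [n] := csS x y; rewrite -pw_shift => [Hn|]; last exact: fs_assoc.
exists (x ⋅ pws (y ⋅ x) (n + n)).
by rewrite -fs_assoc -(pwSr (@fs_assoc S)) -(pwD (@fs_assoc S)) fs_assoc !Hn.
Qed.

Lemma rclass_mulr (x y : S) : rclass (x ⋅ y) = rclass x.
Proof.
have [t Ht] := cs_law_R x y.
apply/setP => s; apply/imsetP/imsetP => -[u _ ->].
  by exists (y ⋅ u); rewrite ?fs_assoc.
by exists (t ⋅ u); rewrite // fs_assoc -Ht.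
Qed.

Lemma lclass_mull (x y : S) : lclass (y ⋅ x) = lclass x.
Proof.
have [t Ht] := cs_law_L x y.
apply/setP => s; apply/imsetP/imsetP => -[u _ ->].
  by exists (u ⋅ y); rewrite ?fs_assoc.
by exists (u ⋅ t); rewrite // -fs_assoc -Ht.
Qed.

Lemma rclass_refl (x : S) : x \in rclass x.
Proof.
by have [t Ht] := cs_law_R x x; apply/imsetP; exists (x ⋅ t); rewrite // fs_assoc.
Qed.

Lemma lclass_refl (x : S) : x \in lclass x.
Proof.
by have [t Ht] := cs_law_L x x; apply/imsetP; exists (t ⋅ x); rewrite // -fs_assoc.
Qed.

Lemma cs_law_period : exists N, 0 < N /\ forall x : S, pws x N = x.
Proof.
have per (x : S) : exists N, 0 < N /\ pws x N = x.
  have [n Hn] := csS x x; exists n.*2.+2; split => //.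
  rewrite -[in RHS]Hn; have -> : x ⋅ x = pws x 1 by [].
  rewrite (pwM (@fs_assoc S)) -(pwSr (@fs_assoc S)).
  by congr pws; lia.
pose N x := projT1 (cid (per x)).
have NP x : 0 < N x /\ pws x (N x) = x := projT2 (cid (per x)).
exists (\prod_(x : S) N x); split; first by apply: prodn_gt0 => x; case: (NP x).
move=> x; rewrite (bigD1 x) //= mulnC.
by have := pw_period (NP x).2 (\prod_(y | y != x) N y) 0; rewrite add0n.
Qed.

(* [pws x n.+2 = x] says x^(n+3) = x, so that x^ω is [pws x n.+1]. *)
Lemma cs_law_omega n : (forall x : S, pws x n.+2 = x) ->
  forall x y : S, pws (x ⋅ y) n.+1 ⋅ x = x.
Proof.
move=> per x y; have [m Hm] := csS x y.
have Hj j : pws (x ⋅ y) (j * m.+1 + m) ⋅ x = x.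
  elim: j => [//|j IH].
  have -> : j.+1 * m.+1 + m = (j * m.+1 + m + m).+1 by rewrite mulSn; lia.
  by rewrite -(pwD (@fs_assoc S)) -fs_assoc Hm IH.
have := Hj n.+1; have -> : n.+1 * m.+1 + m = n.+1 + m * n.+2 by nia.
by rewrite (pw_period (per _)).
Qed.

End CSLaw.

Lemma period_common (S T : finSemigroup) : cs_law S -> cs_law T ->
  exists n, (forall x : S, pws x n.+2 = x) /\ (forall y : T, pws y n.+2 = y).
Proof.
move=> /cs_law_period [N1 [N1_gt0 per1]] /cs_law_period [N2 [N2_gt0 per2]].
exists ((N1 * N2).*2 - 2); have -> : ((N1 * N2).*2 - 2).+2 = (N1 * N2).*2 by nia.
split=> x.
  by have := pw_period (per1 x) (N2.*2) 0; rewrite add0n -doubleMl mulnC.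
by have := pw_period (per2 x) (N1.*2) 0; rewrite add0n -doubleMl.
Qed.

Lemma cs_law_image (S T : finSemigroup) (f : S -> T) :
  is_hom (@fs_mul S) (@fs_mul T) f -> (forall t, exists s, f s = t) ->
  cs_law S -> cs_law T.
Proof.
move=> f_hom f_surj csS x y.
have [x' <-] := f_surj x; have [y' <-] := f_surj y; have [n Hn] := csS x' y'.
by exists n; rewrite -f_hom -(hom_pw f_hom) -f_hom Hn.
Qed.

Definition LZ (A : finType) : finSemigroup :=
  @FinSemigroup A (fun x _ => x) (fun _ _ _ => erefl).
Definition RZ (A : finType) : finSemigroup :=
  @FinSemigroup A (fun _ y => y) (fun _ _ _ => erefl).

Lemma LZ_cs (A : finType) (a : A) : completely_simple (LZ A).
Proof. by apply: (@cs_law_completely_simple _ (a : LZ A)) => x y; exists 0. Qed.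

Lemma RZ_cs (A : finType) (a : A) : completely_simple (RZ A).
Proof. by apply: (@cs_law_completely_simple _ (a : RZ A)) => x y; exists 0. Qed.

Section Product.
Variables S T : finSemigroup.

Definition prod_mul (x y : S * T) : S * T := (x.1 ⋅ y.1, x.2 ⋅ y.2).

Lemma prod_mulA : associative prod_mul.
Proof. by move=> x y z; rewrite /prod_mul /= !fs_assoc. Qed.

Definition prodSG : finSemigroup := FinSemigroup prod_mulA.

Lemma pw_prod (x : prodSG) n : pws x n = (pws x.1 n, pws x.2 n).
Proof. by elim: n => [|n IH]; [case: x | rewrite pwS IH]. Qed.

Lemma cs_law_prod : cs_law S -> cs_law T -> cs_law prodSG.
Proof.
move=> csS csT; have [n [perS perT]] := period_common csS csT.
move=> x y; exists n.+1.
by rewrite pw_prod /= /prod_mul /= -!pwS !cs_law_omega //; case: x.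
Qed.

Lemma prod_cs : completely_simple S -> completely_simple T ->
  completely_simple prodSG.
Proof.
move=> csS csT; have [_ [s _]] := csS; have [_ [t _]] := csT.
apply: (@cs_law_completely_simple prodSG (s, t)).
exact: cs_law_prod (completely_simple_cs_law csS) (completely_simple_cs_law csT).
Qed.

End Product.

Section Subsemigroup.
Variables (S : finSemigroup) (P : pred S).
Hypothesis P_mul : forall x y, P x -> P y -> P (x ⋅ y).

Definition sub_mul (a b : {x | P x}) : {x | P x} :=
  exist _ (val a ⋅ val b) (P_mul (valP a) (valP b)).

Lemma sub_mulA : associative sub_mul.
Proof. by move=> a b c; apply: val_inj; rewrite /= fs_assoc. Qed.

Definition subSG : finSemigroup := FinSemigroup sub_mulA.

Lemma cs_law_sub : cs_law S -> cs_law subSG.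
Proof.
move=> csS a b; have [n Hn] := csS (val a) (val b).
have val_hom : is_hom (@fs_mul subSG) (@fs_mul S) val by [].
by exists n; apply: val_inj; rewrite val_hom (hom_pw val_hom).
Qed.

End Subsemigroup.

Section Quotient.
Variables (S : finSemigroup) (th : S -> S -> Prop).
Hypotheses (th_refl : forall a, th a a) (th_sym : forall a b, th a b -> th b a)
  (th_trans : forall a b c, th a b -> th b c -> th a c)
  (th_mull : forall a b c, th a b -> th (c ⋅ a) (c ⋅ b))
  (th_mulr : forall a b c, th a b -> th (a ⋅ c) (b ⋅ c)).

Definition canon (x : S) : S := odflt x [pick y | `[< th x y >]].

Lemma canon_th x : th x (canon x).
Proof. by rewrite /canon; case: pickP => [y /asboolP //|_]; exact: th_refl. Qed.

Lemma canonP x y : canon x = canon y <-> th x y.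
Proof.
split=> [e|xy].
  by apply: th_trans (canon_th x) _; rewrite e; exact/th_sym/canon_th.
rewrite /canon; have -> : [pick z | `[< th x z >]] = [pick z | `[< th y z >]].
  apply: eq_pick => z; apply/asboolP/asboolP; last exact: th_trans.
  by apply: th_trans; exact: th_sym.
by case: pickP => [//|H]; have := H y; move/asboolP: (th_refl y) => ->.
Qed.

Lemma canon_idem x : canon (canon x) = canon x.
Proof. by apply/canonP/th_sym/canon_th. Qed.

Definition quot_mul (a b : {x | canon x == x}) : {x | canon x == x} :=
  exist _ (canon (val a ⋅ val b)) (introT eqP (canon_idem _)).

Lemma quot_mulA : associative quot_mul.
Proof.
move=> a b c; apply: val_inj => /=; apply/canonP.
apply: th_trans (th_mull _ (th_sym (canon_th _))) _.
by rewrite fs_assoc; exact: th_mulr (canon_th _).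
Qed.

Definition quotSG : finSemigroup := FinSemigroup quot_mulA.

Definition quot_pi (x : S) : quotSG := exist _ (canon x) (introT eqP (canon_idem x)).

Lemma quot_pi_hom : is_hom (@fs_mul S) (@fs_mul quotSG) quot_pi.
Proof.
move=> x y; apply: val_inj => /=; apply/canonP.
by apply: th_trans (th_mulr _ (canon_th x)) _; exact: th_mull (canon_th y).
Qed.

Lemma quot_pi_surj (t : quotSG) : exists s, quot_pi s = t.
Proof. by exists (val t); apply: val_inj => /=; exact/eqP/(valP t). Qed.

Lemma quot_piP x y : quot_pi x = quot_pi y <-> th x y.
Proof. by rewrite -canonP; split => [/(congr1 val)|e] //; exact: val_inj. Qed.

Lemma cs_law_quot : cs_law S -> cs_law quotSG.
Proof. exact: cs_law_image quot_pi_hom quot_pi_surj. Qed.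

End Quotient.

Section FiniteQuotient.
Variables (X : Type) (mX : X -> X -> X) (S : finSemigroup) (f : X -> S)
  (th : X -> X -> Prop).
Hypotheses (f_hom : is_hom mX (@fs_mul S) f)
  (th_ker : forall x y, f x = f y -> th x y)
  (th_sym : forall x y, th x y -> th y x)
  (th_trans : forall x y z, th x y -> th y z -> th x z)
  (th_mull : forall x y c, th x y -> th (mX c x) (mX c y))
  (th_mulr : forall x y c, th x y -> th (mX x c) (mX y c)).

Lemma finite_quotient : exists (T : finSemigroup) (pi : X -> T),
  [/\ is_hom mX (@fs_mul T) pi, forall t, exists x, pi x = t,
      forall x y, pi x = pi y <-> th x y & cs_law S -> cs_law T].
Proof.
pose P (s : S) := `[< exists x, f x = s >].
have P_mul s t : P s -> P t -> P (s ⋅ t).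
  by move=> /asboolP [x <-] /asboolP [y <-]; apply/asboolP; exists (mX x y).
pose S0 := subSG P_mul.
pose f0 x : S0 := exist _ (f x) (asboolT (ex_intro _ x erefl)).
have f0_hom : is_hom mX (@fs_mul S0) f0 by move=> x y; apply: val_inj; exact: f_hom.
have f0_surj (s : S0) : exists x, f0 x = s.
  by case: s => s Ps; have /asboolP [x ex] := Ps; exists x; exact: val_inj.
have f0_ker x y : f0 x = f0 y -> th x y by move=> e; apply/th_ker/(congr1 val e).
pose th0 (s t : S0) := exists x y, [/\ f0 x = s, f0 y = t & th x y].
have th0_refl s : th0 s s by have [x <-] := f0_surj s; exists x, x; split; auto.
have th0_sym s t : th0 s t -> th0 t s.
  by move=> [x [y [<- <- xy]]]; exists y, x; split; auto.
have th0_trans s t w : th0 s t -> th0 t w -> th0 s w.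
  move=> [x [y [<- <- xy]]] [y' [z [yy' <- y'z]]]; exists x, z; split => //.
  by apply: th_trans xy (th_trans (f0_ker _ _ (esym yy')) y'z).
have th0_mull s t c : th0 s t -> th0 (c ⋅ s) (c ⋅ t).
  move=> [x [y [<- <- xy]]]; have [w <-] := f0_surj c.
  by exists (mX w x), (mX w y); rewrite !f0_hom; split; auto.
have th0_mulr s t c : th0 s t -> th0 (s ⋅ c) (t ⋅ c).
  move=> [x [y [<- <- xy]]]; have [w <-] := f0_surj c.
  by exists (mX x w), (mX y w); rewrite !f0_hom; split; auto.
pose q := quot_pi th0_refl th0_sym th0_trans th0_mull th0_mulr.
exists (quotSG th0_refl th0_sym th0_trans th0_mull th0_mulr), (fun x => q (f0 x)).
split.
- by move=> x y; rewrite f0_hom; exact: quot_pi_hom.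
- by move=> t; have [s <-] := quot_pi_surj t; have [x <-] := f0_surj s; exists x.
- move=> x y; rewrite quot_piP; split => [[x' [y' [/f0_ker xx' /f0_ker y'y x'y']]]|xy].
    by apply: th_trans (th_sym xx') (th_trans x'y' y'y).
  by exists x, y.
- by move=> /(@cs_law_sub _ _ P_mul); exact: cs_law_quot.
Qed.

End FiniteQuotient.

(** * Continuous homomorphisms onto finite completely simple semigroups *)

Local Open Scope classical_set_scope.

Lemma cont_discrete_open (X : topologicalType) (S : Type) (h : X -> S) :
  cont_discrete h -> forall B : set S, open (h @^-1` B).
Proof.
move=> h_cont B; have -> : h @^-1` B = \bigcup_(s in B) h @^-1` [set s].
  by apply/seteqP; split => x /=; [move=> Bx; exists (h x) | move=> [s Bs /= ->]].
by apply: bigcup_open => s _; exact: h_cont.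
Qed.

Lemma cont_discrete_closed (X : topologicalType) (S : Type) (h : X -> S) :
  cont_discrete h -> forall B : set S, closed (h @^-1` B).
Proof. by move=> h_cont B; rewrite -openC preimage_setC; exact: cont_discrete_open. Qed.

Lemma cont_discrete_factor (X : topologicalType) (S T : Type)
    (f : X -> S) (g : X -> T) :
  cont_discrete f -> (forall x y, f x = f y -> g x = g y) -> cont_discrete g.
Proof.
move=> f_cont fg t.
have -> : g @^-1` [set t] = f @^-1` [set s | exists x, f x = s /\ g x = t].
  by apply/seteqP; split => [x gx|x [y [/fg yx gy]]] /=; [exists x | rewrite -yx].
exact: cont_discrete_open.
Qed.

Lemma pair_cont (X : topologicalType) (S T : Type) (f : X -> S) (g : X -> T) :
  cont_discrete f -> cont_discrete g -> cont_discrete (fun x => (f x, g x)).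
Proof.
move=> f_cont g_cont [s t].
have -> : (fun x => (f x, g x)) @^-1` [set (s, t)] =
    f @^-1` [set s] `&` g @^-1` [set t].
  by apply/seteqP; split => x /=; case=> -> ->.
exact: openI.
Qed.

Lemma compact_directed_cap (T : topologicalType) (D : set (set T)) :
  compact [set: T] -> D !=set0 -> (forall E, D E -> closed E) ->
  (forall E, D E -> E !=set0) ->
  (forall E1 E2, D E1 -> D E2 -> exists2 E3, D E3 & E3 `<=` E1 `&` E2) ->
  exists p, forall E, D E -> E p.
Proof.
move=> T_compact [E0 DE0] D_closed D_ne D_dir.
have FF : ProperFilter (filter_from D id).
  apply: filter_from_proper => [|E DE]; last exact: D_ne.
  apply: filter_from_filter; first by exists E0.
  by move=> E1 E2 DE1 DE2; have [E3 DE3 E3_sub] := D_dir _ _ DE1 DE2; exists E3.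
have [p [_ p_clust]] := T_compact _ FF (@filterT _ _ FF).
exists p => E DE; apply: (D_closed E DE) => B pB.
by apply: p_clust pB; exists E.
Qed.

Section ContinuousHoms.
Variables (F : freeProCS) (A : finType).
Local Notation X := (FP F A).
Local Notation mX := (@fp_mul F A).

Record cshom := CSHom {
  cod : finSemigroup;
  cod_cs : completely_simple cod;
  hmap :> X -> cod;
  hmap_hom : is_hom mX (@fs_mul cod) hmap;
  hmap_cont : cont_discrete hmap }.

Definition refines (G H : cshom) := forall x y, G x = G y -> H x = H y.

Lemma pair_hom (G H : cshom) :
  is_hom mX (@fs_mul (prodSG (cod G) (cod H))) (fun x => (G x, H x)).
Proof. by move=> x y; rewrite !hmap_hom. Qed.

Definition cshom_pair (G H : cshom) : cshom :=
  CSHom (prod_cs (cod_cs G) (cod_cs H)) (@pair_hom G H)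
    (pair_cont (@hmap_cont G) (@hmap_cont H)).

Lemma refines_pairl G H : refines (cshom_pair G H) G. Proof. by move=> x y []. Qed.
Lemma refines_pairr G H : refines (cshom_pair G H) H. Proof. by move=> x y []. Qed.

Lemma const_cont (T : eqType) (t : T) : cont_discrete (fun _ : X => t).
Proof.
move=> s; have [->|st] := eqVneq t s.
  by rewrite (_ : _ @^-1` _ = setT); [exact: openT | apply/seteqP].
rewrite (_ : _ @^-1` _ = set0); first exact: open0.
by apply/seteqP; split => // x /= ts; rewrite ts eqxx in st.
Qed.

Definition cshom_unit : cshom :=
  @CSHom (LZ unit) (LZ_cs tt) (fun _ => tt) (fun _ _ => erefl) (const_cont tt).

Lemma cshom_sep (x y : X) : (forall G : cshom, G x = G y) -> x = y.
Proof.
move=> Gxy; apply: contrapT => /fp_residual [S [S_cs [h [h_hom h_cont]]]].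
by apply; exact: (Gxy (CSHom S_cs h_hom h_cont)).
Qed.

Lemma cshom_cap (T : topologicalType) (E : cshom -> set T) :
  compact [set: T] -> (forall G, closed (E G)) -> (forall G, E G !=set0) ->
  (forall G H, E (cshom_pair G H) `<=` E G `&` E H) -> exists p, forall G, E G p.
Proof.
move=> T_compact E_closed E_ne E_pair.
have [p Dp] : exists p, forall E', (exists G, E' = E G) -> E' p.
  apply: compact_directed_cap => //; first by exists (E cshom_unit), cshom_unit.
  - by move=> _ [G ->].
  - by move=> _ [G ->].
  - move=> _ _ [G ->] [H ->].
    by exists (E (cshom_pair G H)) => //; exists (cshom_pair G H).
by exists p => G; apply: Dp; exists G.
Qed.

Lemma fiber_closed (G : cshom) s : closed [set y | G y = s].
Proof. exact: (cont_discrete_closed (B := [set s]) (@hmap_cont G)). Qed.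

Lemma fiber_fst_closed (G : cshom) s : closed [set p : X * X | G p.1 = s].
Proof.
apply: preimage_closed (@fiber_closed G s) => -[x y] _.
exact: (@cvg_fst _ _ (nbhs x) (nbhs y)).
Qed.

Lemma fiber_snd_closed (G : cshom) s : closed [set p : X * X | G p.2 = s].
Proof.
apply: preimage_closed (@fiber_closed G s) => -[x y] _.
exact: (@cvg_snd _ _ (nbhs x) (nbhs y)).
Qed.

Lemma cshom_nbhs (O : set X) x : open O -> O x ->
  exists G : cshom, forall y, G y = G x -> O y.
Proof.
move=> O_open Ox; apply: contrapT => noG.
pose E (G : cshom) := ~` O `&` [set y | G y = G x].
have [y Ey] : exists y, forall G, E G y.
  apply: cshom_cap; first exact: fp_compact.
  - by move=> G; apply: closedI; [exact: open_closedC | exact: fiber_closed].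
  - move=> G; apply: contrapT => E0; apply: noG; exists G => y Gy.
    by apply: contrapT => nOy; apply: E0; exists y.
  - by move=> G H y [nOy [Gy Hy]].
have yx : y = x by apply: cshom_sep => G; case: (Ey G).
by case: (Ey cshom_unit); rewrite yx.
Qed.

End ContinuousHoms.
Arguments hmap_hom {F A} c.
Arguments hmap_cont {F A} c.

Section Universal.
Variable F : freeProCS.

Lemma cshom_ext (B : finType) (S : finSemigroup) (h1 h2 : FP F B -> S) :
  completely_simple S ->
  is_hom (@fp_mul F B) (@fs_mul S) h1 -> cont_discrete h1 ->
  is_hom (@fp_mul F B) (@fs_mul S) h2 -> cont_discrete h2 ->
  (forall b, h1 (fp_gen F b) = h2 (fp_gen F b)) -> h1 = h2.
Proof.
move=> S_cs h1_hom h1_cont h2_hom h2_cont e.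
have [h [_ h_uniq]] := fp_universal F S_cs (h2 \o @fp_gen F B).
by rewrite (h_uniq h1) // (h_uniq h2).
Qed.

Section Extension.
Variables (B : finType) (S : finSemigroup) (S_cs : completely_simple S) (f : B -> S).

Definition univ : FP F B -> S := projT1 (cid (fp_universal F S_cs f)).

Lemma univ_spec : [/\ is_hom (@fp_mul F B) (@fs_mul S) univ, cont_discrete univ &
  forall b, univ (fp_gen F b) = f b].
Proof. exact: (projT2 (cid (fp_universal F S_cs f))).1. Qed.

Lemma univ_hom : is_hom (@fp_mul F B) (@fs_mul S) univ. Proof. by case: univ_spec. Qed.
Lemma univ_cont : cont_discrete univ. Proof. by case: univ_spec. Qed.
Lemma univ_gen b : univ (fp_gen F b) = f b. Proof. by case: univ_spec. Qed.

End Extension.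

Lemma univ_sub (B : finType) (S : finSemigroup) (S_cs : completely_simple S)
  (f : B -> S) (P : pred S) (P_mul : forall x y, P x -> P y -> P (x ⋅ y)) (s : S) :
  P s -> (forall b, P (f b)) -> forall z, P (univ S_cs f z).
Proof.
move=> Ps Pf z.
have sub_cs : completely_simple (subSG P_mul).
  apply: (@cs_law_completely_simple _ (exist _ s Ps : subSG P_mul)).
  exact/cs_law_sub/completely_simple_cs_law.
pose f0 b : subSG P_mul := exist _ (f b) (Pf b).
have -> : univ S_cs f = (fun z => val (univ sub_cs f0 z)).
  apply: cshom_ext => //; first exact: univ_hom; first exact: univ_cont.
  - by move=> x y; rewrite univ_hom.
  - by apply: cont_discrete_factor (univ_cont sub_cs f0) _ => x y ->.
  - by move=> b; rewrite !univ_gen.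
exact: valP.
Qed.

End Universal.
Arguments univ_hom {F B S}.
Arguments univ_cont {F B S}.
Arguments univ_gen {F B S}.

Section FirstLastLetter.
Variables (F : freeProCS) (A : finType).
Local Notation X := (FP F A).

(* Over [option A] the left- and right-zero semigroups are nonempty, hence
   completely simple, even when [A] is empty. *)
Definition first_letter : cshom F A :=
  CSHom (LZ_cs None) (univ_hom (LZ_cs None) (Some : A -> LZ (option A)))
    (univ_cont (LZ_cs None) (Some : A -> LZ (option A))).

Definition last_letter : cshom F A :=
  CSHom (RZ_cs None) (univ_hom (RZ_cs None) (Some : A -> RZ (option A)))
    (univ_cont (RZ_cs None) (Some : A -> RZ (option A))).

(* [rclass \o H] is a continuous homomorphism into a left-zero semigroup, so it
   is determined by its values on the generators and factors through
   [first_letter]. *)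
Lemma first_letter_rclass (H : cshom F A) (b b' : X) :
  first_letter b = first_letter b' -> H b' \in rclass (H b).
Proof.
have H_cs := completely_simple_cs_law (cod_cs H).
pose k (o : option A) : LZ {set cod H} :=
  if o is Some a then rclass (H (fp_gen F a)) else finset.set0.
have rclassH : (fun x => rclass (H x) : LZ {set cod H}) = k \o first_letter.
  apply: (cshom_ext (LZ_cs finset.set0)).
  - by move=> x y; rewrite hmap_hom /= rclass_mulr.
  - by apply: cont_discrete_factor (hmap_cont H) _ => x y ->.
  - by move=> x y /=; rewrite univ_hom.
  - by apply: cont_discrete_factor (hmap_cont first_letter) _ => x y /= ->.
  - by move=> a; rewrite /= univ_gen.
have rclassE x : rclass (H x) = k (first_letter x) := congr1 (fun h => h x) rclassH.
by move=> ebb'; rewrite rclassE ebb' -rclassE; exact: rclass_refl.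
Qed.

Lemma last_letter_lclass (H : cshom F A) (b b' : X) :
  last_letter b = last_letter b' -> H b' \in lclass (H b).
Proof.
have H_cs := completely_simple_cs_law (cod_cs H).
pose k (o : option A) : RZ {set cod H} :=
  if o is Some a then lclass (H (fp_gen F a)) else finset.set0.
have lclassH : (fun x => lclass (H x) : RZ {set cod H}) = k \o last_letter.
  apply: (cshom_ext (RZ_cs finset.set0)).
  - by move=> x y; rewrite hmap_hom /= lclass_mull.
  - by apply: cont_discrete_factor (hmap_cont H) _ => x y ->.
  - by move=> x y /=; rewrite univ_hom.
  - by apply: cont_discrete_factor (hmap_cont last_letter) _ => x y /= ->.
  - by move=> a; rewrite /= univ_gen.
have lclassE x : lclass (H x) = k (last_letter x) := congr1 (fun h => h x) lclassH.
by move=> ebb'; rewrite lclassE ebb' -lclassE; exact: lclass_refl.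
Qed.

End FirstLastLetter.

Section Lift.
Variables (F : freeProCS) (A B : finType) (x : B -> FP F A) (x0 : FP F A).
Local Notation X := (FP F A).

Definition lift_at (G : cshom F A) : FP F B -> cod G :=
  univ (cod_cs G) (fun b => G (x b)).

Lemma lift_at_image (G : cshom F A) z : exists y, G y = lift_at G z.
Proof.
pose P (s : cod G) := `[< exists y, G y = s >].
suff /asboolP : P (lift_at G z) by [].
have P_x0 : P (G x0) by apply/asboolP; exists x0.
apply: (univ_sub _ _ P_x0) => [s t|b]; last by apply/asboolP; exists (x b).
move=> /asboolP [y <-] /asboolP [y' <-]; apply/asboolP.
by exists (fp_mul y y'); exact: hmap_hom.
Qed.

Lemma lift_at_pair (G H : cshom F A) z :
  lift_at (cshom_pair G H) z = (lift_at G z, lift_at H z).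
Proof.
suff -> : lift_at (cshom_pair G H) = (fun z => (lift_at G z, lift_at H z)) by [].
apply: (cshom_ext (cod_cs (cshom_pair G H))).
- exact: univ_hom.
- exact: univ_cont.
- by move=> u v; rewrite /lift_at !univ_hom.
- exact: pair_cont (univ_cont _ _) (univ_cont _ _).
- by move=> b; rewrite /lift_at !univ_gen.
Qed.

Lemma lift_exists z : exists p, forall G : cshom F A, G p = lift_at G z.
Proof.
apply: (cshom_cap (E := fun G => [set p | G p = lift_at G z])).
- exact: fp_compact.
- by move=> G; exact: fiber_closed.
- by move=> G; have [y Hy] := lift_at_image G z; exists y.
- by move=> G H p; rewrite /= lift_at_pair => -[-> ->].
Qed.

Definition lift z : X := projT1 (cid (lift_exists z)).

Lemma liftP (G : cshom F A) z : G (lift z) = lift_at G z.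
Proof. exact: (projT2 (cid (lift_exists z))). Qed.

Lemma lift_hom : is_hom (@fp_mul F B) (@fp_mul F A) lift.
Proof.
by move=> u v; apply: cshom_sep => G; rewrite hmap_hom !liftP /lift_at univ_hom.
Qed.

Lemma lift_gen b : lift (fp_gen F b) = x b.
Proof. by apply: cshom_sep => G; rewrite liftP /lift_at univ_gen. Qed.

Lemma lift_cont : continuous lift.
Proof.
apply/continuousP => O O_open; rewrite openE => z Oz.
have [G HG] := cshom_nbhs O_open Oz.
rewrite /interior nbhsE; exists (lift_at G @^-1` [set lift_at G z]).
  by split; [exact: univ_cont | by []].
by move=> z' /= e; apply: HG; rewrite !liftP.
Qed.

End Lift.

(** * Provability *)

Fixpoint tmap (f : nat -> nat) (t : sterm) : sterm :=
  match t with
  | SVar i => SVar (f i)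
  | SMul t1 t2 => SMul (tmap f t1) (tmap f t2)
  end.

Lemma teval_tmap (T : Type) (m : T -> T -> T) val f t :
  teval m val (tmap f t) = teval m (val \o f) t.
Proof. by elim: t => [i|t1 IH1 t2 IH2] //=; rewrite IH1 IH2. Qed.

Lemma eq_teval (T : Type) (m : T -> T -> T) val val' t :
  val =1 val' -> teval m val t = teval m val' t.
Proof. by move=> e; elim: t => [i|t1 IH1 t2 IH2] //=; rewrite IH1 IH2. Qed.

Section Provability.
Variables (F : freeProCS) (Sigma : pseudoid F -> Prop) (A : finType).
Local Notation X := (FP F A).
Local Notation mX := (@fp_mul F A).
Local Notation prov := (@provable F Sigma A).

Lemma mull_cont (c : X) : continuous (mX c).
Proof.
move=> a; apply: (@continuous2_cvg _ _ _ _ _ _ (fun=> c) id mX c a).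
- exact: (@fp_mul_cont F A (c, a)).
- exact: cvg_cst.
- exact: cvg_id.
Qed.

Lemma mulr_cont (c : X) : continuous (mX^~ c).
Proof.
move=> a; apply: (@continuous2_cvg _ _ _ _ _ _ id (fun=> c) mX a c).
- exact: (@fp_mul_cont F A (a, c)).
- exact: cvg_id.
- exact: cvg_cst.
Qed.

Lemma Sigma0_provable (x y : X) : Sigma0 Sigma x y -> prov x y.
Proof. by move=> xy R R0 *; exact: R0. Qed.

Lemma provable_refl x : prov x x.
Proof. by move=> R _ R_refl *; exact: R_refl. Qed.

Lemma provable_trans x y z : prov x y -> prov y z -> prov x z.
Proof.
move=> xy yz R R0 R_refl R_trans R_closed.
by apply: (R_trans _ y); [exact: xy | exact: yz].
Qed.

Lemma provable_closed : closed [set p : X * X | prov p.1 p.2].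
Proof.
pose D := [set R : X -> X -> Prop | [/\ forall a b, Sigma0 Sigma a b -> R a b,
  forall a, R a a, forall a b c, R a b -> R b c -> R a c &
  closed [set p : X * X | R p.1 p.2]]].
have -> : [set p : X * X | prov p.1 p.2] = \bigcap_(R in D) [set p | R p.1 p.2].
  apply/seteqP; split => [p pp R [R0 R1 R2 R3]|p Dp R R0 R1 R2 R3]; first exact: pp.
  exact: (Dp R (And4 R0 R1 R2 R3)).
by apply: closed_bigI => R [].
Qed.

Lemma provable_congr (f : X -> X) : continuous f ->
  (forall x y, Sigma0 Sigma x y -> Sigma0 Sigma (f x) (f y)) ->
  forall x y, prov x y -> prov (f x) (f y).
Proof.
move=> f_cont f_Sigma0 x y xy; apply: (xy (fun a b => prov (f a) (f b))).
- by move=> a b /f_Sigma0; exact: Sigma0_provable.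
- by move=> a; exact: provable_refl.
- by move=> a b c; exact: provable_trans.
- apply: (preimage_closed (f := fun p : X * X => (f p.1, f p.2)) _ provable_closed).
  move=> [a b] _.
  apply: cvg_pair.
    exact: cvg_comp (@cvg_fst _ _ (nbhs a) (nbhs b) _) (f_cont a).
  exact: cvg_comp (@cvg_snd _ _ (nbhs a) (nbhs b) _) (f_cont b).
Qed.

Lemma Sigma0_sym (x y : X) : Sigma0 Sigma x y -> Sigma0 Sigma y x.
Proof.
move=> [B [u [v [Huv [phi [phi_hom phi_cont [t [w [-> ->]]]]]]]]].
exists B, v, u; split; first by case: Huv; [right | left].
by exists phi; split => //; exists t, w.
Qed.

Lemma provable_sym x y : prov x y -> prov y x.
Proof.
move=> xy; apply: (xy (fun a b => prov b a)).
- by move=> a b /Sigma0_sym; exact: Sigma0_provable.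
- exact: provable_refl.
- by move=> a b c ab bc; exact: provable_trans bc ab.
- apply: (preimage_closed (f := fun p : X * X => (p.2, p.1)) _ provable_closed).
  by move=> p _; exact: swap_continuous.
Qed.

(* [c * t(phi u, w)] is an instance of the term [c * t'], where [t'] is [t] with
   the parameters shifted up by one to free variable [1] for [c]. *)
Lemma Sigma0_mull (c x y : X) : Sigma0 Sigma x y -> Sigma0 Sigma (mX c x) (mX c y).
Proof.
move=> [B [u [v [Huv [phi [phi_hom phi_cont [t [w [-> ->]]]]]]]]].
exists B, u, v; split => //; exists phi; split => //.
exists (SMul (SVar 1) (tmap (bump 1) t)), (fun i => if i is i'.+1 then w i' else c).
by rewrite /= !teval_tmap; split; congr mX; apply: eq_teval => -[|i].
Qed.

Lemma Sigma0_mulr (c x y : X) : Sigma0 Sigma x y -> Sigma0 Sigma (mX x c) (mX y c).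
Proof.
move=> [B [u [v [Huv [phi [phi_hom phi_cont [t [w [-> ->]]]]]]]]].
exists B, u, v; split => //; exists phi; split => //.
exists (SMul (tmap (bump 1) t) (SVar 1)), (fun i => if i is i'.+1 then w i' else c).
by rewrite /= !teval_tmap; split; congr mX; apply: eq_teval => -[|i].
Qed.

Lemma provable_mul x y x' y' : prov x x' -> prov y y' -> prov (mX x y) (mX x' y').
Proof.
move=> xx' yy'; apply: (@provable_trans _ (mX x' y)).
  by apply: (provable_congr (@mulr_cont y)) xx' => a b; exact: Sigma0_mulr.
by apply: (provable_congr (@mull_cont x')) yy' => a b; exact: Sigma0_mull.
Qed.

Lemma provable_pw x y n : prov x y -> prov (pw mX x n) (pw mX y n).
Proof. by move=> xy; elim: n => [//|n IH]; rewrite !pwS; exact: provable_mul. Qed.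

End Provability.

(** * The finite model *)

Section Congruence.
Variables (F : freeProCS) (Sigma : pseudoid F -> Prop) (A : finType) (g : cshom F A).
Hypotheses (g_first : refines g (first_letter F A))
  (g_last : refines g (last_letter F A)).
Local Notation X := (FP F A).
Local Notation mX := (@fp_mul F A).
Local Notation pwX := (pw (@fp_mul F A)).
Local Notation prov := (@provable F Sigma A).

Lemma provable_witness (H : cshom F A) a b b' : prov a b -> g b = g b' ->
  exists p : X * X, [/\ g p.1 = g a, prov p.1 p.2 & H p.2 = H b'].
Proof.
move=> ab gbb'.
have [n [per_g per_H]] := period_common (completely_simple_cs_law (cod_cs g))
  (completely_simple_cs_law (cod_cs H)).
pose w c := mX (mX (mX (mX c (pwX b n)) b') (pwX (mX c (pwX b n.+1)) n)) c.
exists (w a, w b); split => /=.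
- rewrite /w !(hom_pw (hmap_hom g), hmap_hom) -gbb'.
  set al := g a; set be := g b.
  rewrite -(fs_assoc al) -(pwSr (@fs_assoc _)) -(pwS _ (al ⋅ pws be n.+1) n).
  exact/cs_law_omega/per_g/completely_simple_cs_law/cod_cs.
- rewrite /w; do ![exact: ab | exact: provable_refl | apply: provable_mul
                   | apply: provable_pw].
- rewrite /w !(hom_pw (hmap_hom H), hmap_hom).
  set be := H b.
  have be_idem : be ⋅ pws be n.+1 = be := per_H be.
  have be_b' := omega_rclass (per_H be) (first_letter_rclass H (g_first gbb')).
  have b'_be := omega_lclass (per_H be) (last_letter_lclass H (g_last gbb')).
  by rewrite -(pwS _ be n) be_b' be_idem -fs_assoc -(pwSr (@fs_assoc _)) b'_be.
Qed.

Lemma provable_transfer a b b' c : prov a b -> g b = g b' -> prov b' c ->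
  exists2 x, g x = g a & prov x c.
Proof.
move=> ab gbb' b'c.
pose E (H : cshom F A) := [set p : X * X | g p.1 = g a] `&`
  [set p | prov p.1 p.2] `&` [set p | H p.2 = H b'].
have [p Ep] : exists p, forall H, E H p.
  apply: cshom_cap.
  - by rewrite -setXTT; apply: compact_setX; exact: fp_compact.
  - move=> H; apply: closedI; last exact: fiber_snd_closed.
    by apply: closedI; [exact: fiber_fst_closed | exact: provable_closed].
  - by move=> H; have [q [q1 q12 q2]] := provable_witness H ab gbb'; exists q.
  - by move=> G H q [[q1 q12] [Gq2 Hq2]]; split.
have p2 : p.2 = b' by apply: cshom_sep => H; have [_ []] := Ep H.
have [[p1 p12] _] := Ep g.
by exists p.1 => //; apply: provable_trans p12 _; rewrite p2.
Qed.

Definition provable_upto (x y : X) :=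
  exists x' y', [/\ g x = g x', prov x' y' & g y' = g y].

Lemma provable_upto_quotient (x0 : X) : exists (T : finSemigroup) (pi : X -> T),
  [/\ completely_simple T, is_hom mX (@fs_mul T) pi, cont_discrete pi,
      forall t, exists x, pi x = t & forall x y, pi x = pi y <-> provable_upto x y].
Proof.
have upto_ker x y : g x = g y -> provable_upto x y.
  by move=> gxy; exists y, y; split => //; exact: provable_refl.
have upto_sym x y : provable_upto x y -> provable_upto y x.
  by move=> [x' [y' [? /provable_sym ? ?]]]; exists y', x'.
have upto_trans x y z : provable_upto x y -> provable_upto y z -> provable_upto x z.
  move=> [x1 [y1 [gx x1y1 gy1]]] [y2 [z2 [gy y2z2 gz2]]].
  have [x0' gx0' x0'z2] := provable_transfer x1y1 (etrans gy1 gy) y2z2.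
  by exists x0', z2; split => //; rewrite gx0'.
have upto_mull x y c : provable_upto x y -> provable_upto (mX c x) (mX c y).
  move=> [x' [y' [gx x'y' gy]]]; exists (mX c x'), (mX c y').
  by rewrite !hmap_hom gx gy; split => //; exact: provable_mul (provable_refl _) x'y'.
have upto_mulr x y c : provable_upto x y -> provable_upto (mX x c) (mX y c).
  move=> [x' [y' [gx x'y' gy]]]; exists (mX x' c), (mX y' c).
  by rewrite !hmap_hom gx gy; split => //; exact: provable_mul x'y' (provable_refl _).
have [T [pi [pi_hom pi_surj piP cs_T]]] :=
  finite_quotient (hmap_hom g) upto_ker upto_sym upto_trans upto_mull upto_mulr.
exists T, pi; split => //.
- exact/(cs_law_completely_simple (pi x0))/cs_T/completely_simple_cs_law/cod_cs.
- by apply: cont_discrete_factor (hmap_cont g) _ => x y /upto_ker /piP.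
Qed.

End Congruence.

Section Model.
Variables (F : freeProCS) (Sigma : pseudoid F -> Prop) (A : finType).
Local Notation X := (FP F A).
Local Notation prov := (@provable F Sigma A).

Lemma quotient_in_model (T : finSemigroup) (pi : X -> T) :
  completely_simple T -> is_hom (@fp_mul F A) (@fs_mul T) pi -> cont_discrete pi ->
  (forall t, exists x, pi x = t) -> (forall x y, prov x y -> pi x = pi y) ->
  in_model Sigma T.
Proof.
move=> T_cs pi_hom pi_cont pi_surj pi_prov.
split => // -[B [u v]] Sigma_uv h h_hom h_cont /=.
have [_ [e _]] := T_cs; have [x0 _] := pi_surj e.
pose xs b := projT1 (cid (pi_surj (h (fp_gen F b)))).
have xsP b : pi (xs b) = h (fp_gen F b) := projT2 (cid (pi_surj (h (fp_gen F b)))).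
pose phi := lift xs x0.
have phi_cont : continuous phi by exact: lift_cont.
have -> : h = pi \o phi.
  apply: cshom_ext => //.
  - by move=> z z'; rewrite /= /phi lift_hom pi_hom.
  - move=> t; rewrite comp_preimage.
    by move/continuousP: phi_cont; apply; exact: cont_discrete_open.
  - by move=> b; rewrite /= /phi lift_gen xsP.
apply: pi_prov; apply: Sigma0_provable.
exists B, u, v; split; first by left.
exists phi; split; [exact: lift_hom | exact: phi_cont |].
by exists (SVar 0), (fun=> x0).
Qed.

End Model.

Lemma separating_cshom (F : freeProCS) (Sigma : pseudoid F -> Prop) (A : finType)
    (u v : FP F A) :
  ~ provable Sigma u v -> exists g : cshom F A,
  [/\ refines g (first_letter F A), refines g (last_letter F A) &
      ~ provable_upto Sigma g u v].
Proof.
move=> not_uv.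
have : nbhs (u, v) (~` [set p | provable Sigma p.1 p.2]).
  by move: (closed_openC (@provable_closed F Sigma A)); rewrite openE; apply.
move=> [[P Q] /= [Pu Qv] PQ].
move: Pu Qv; rewrite !nbhsE => -[P' [P'_open P'u] P'P] [Q' [Q'_open Q'v] Q'Q].
have [G1 G1P'] := cshom_nbhs P'_open P'u.
have [G2 G2Q'] := cshom_nbhs Q'_open Q'v.
exists (cshom_pair (cshom_pair G1 G2)
  (cshom_pair (first_letter F A) (last_letter F A))).
split.
- by move=> x y /refines_pairr /refines_pairl.
- by move=> x y /refines_pairr /refines_pairr.
move=> [x' [y' [/esym/refines_pairl/refines_pairl/G1P'/P'P Px'
  x'y' /refines_pairl/refines_pairr/G2Q'/Q'Q Qy']]].
exact: (PQ (x', y')).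
Qed.

Theorem theorem9p2 (F : freeProCS) : strong_CS F.
Proof.
move=> Sigma A u v holds_uv; apply: contrapT => not_uv.
have [g [g_first g_last not_upto_uv]] := separating_cshom not_uv.
have [T [pi [T_cs pi_hom pi_cont pi_surj piP]]] :=
  provable_upto_quotient Sigma g_first g_last u.
have T_model : in_model Sigma T.
  apply: quotient_in_model T_cs pi_hom pi_cont pi_surj _ => x y xy.
  by apply/piP; exists x, y; split.
by apply/not_upto_uv/piP; exact: holds_uv T_model pi pi_hom pi_cont.
Qed.
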